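(* Let $k$ be a field, let $n,m,n_1,\dots,n_r$ be positive integers with $n_1+\dots+n_r=n$, and let $G\subseteq\mathfrak{S}_r$ be a permutation group. There exists an $n\times n$ quantum parameter matrix $\mathfrak{q}$ with blocks $B_1,\dots,B_r$ of sizes $|B_i|=n_i$ and $\mathrm{Stab}(\mathfrak{q})=G$ (identifying $B_i$ with $i$), giving $\mathrm{Aut}_{\mathrm{gr}}(S_{\mathfrak{q}}(k^n))\cong\prod_i\mathrm{GL}(n_i,k)\rtimes G$, if and only if there exists an $mn\times mn$ quantum parameter matrix $\mathfrak{q}'$ with blocks $B'_1,\dots,B'_r$ of sizes $|B'_i|=m\,n_i$ and $\mathrm{Stab}(\mathfrak{q}')=G$ (identifying $B'_i$ with $i$), giving $\mathrm{Aut}_{\mathrm{gr}}(S_{\mathfrak{q}'}(k^{mn}))\cong\prod_i\mathrm{GL}(m\cdot n_i,k)\rtimes G$.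
   Context: A quantum parameter matrix is a square matrix $\mathfrak{p}=(p_{ij})$ over $k$ with $p_{ii}=1$ and $p_{ij}p_{ji}=1$. For such $\mathfrak{p}$ of size $N$, $S_{\mathfrak{p}}(k^N)$ is the $k$-algebra generated by the standard basis $v_1,\dots,v_N$ with relations $v_jv_i=p_{ij}v_iv_j$, graded by $\deg v_i=1$; $\mathrm{Aut}_{\mathrm{gr}}$ is its group of degree-preserving algebra automorphisms, viewed as a subgroup of $\mathrm{GL}(N,k)$. The blocks of $\mathfrak{p}$ are the classes of the partition of $[N]$ with $i\sim j$ iff rows $i,j$ of $\mathfrak{p}$ are identical; $\mathfrak{p}_{BC}=(p_{ij})_{i\in B,j\in C}$; with $r$ the number of blocks, $\mathfrak{S}_r$ permutes the blocks and $\mathrm{Stab}(\mathfrak{p})=\{\sigma\in\mathfrak{S}_r:|\sigma(B)|=|B|\text{ and }\mathfrak{p}_{BC}=\mathfrak{p}_{\sigma(B)\sigma(C)}\text{ for all blocks }B,C\}$. For any quantum parameter matrix $\mathfrak{p}$ one has $\mathrm{Aut}_{\mathrm{gr}}(S_{\mathfrak{p}}(k^N))\cong(\prod_{B}\mathrm{GL}(V_B))\rtimes\mathrm{Stab}(\mathfrak{p})$ with $\mathrm{GL}(V_B)\cong\mathrm{GL}(|B|,k)$ and $\mathrm{Stab}(\mathfrak{p})$ permuting the factors. *)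

From HB Require Import structures.
From mathcomp Require Import all_boot all_order all_algebra all_fingroup.
Set Implicit Arguments. Unset Strict Implicit. Unset Printing Implicit Defensive.
Import GRing.Theory.
Local Open Scope ring_scope.

Definition qparam (k : fieldType) (N : nat) (p : 'M[k]_N) : Prop :=
  (forall i, p i i = 1) /\ (forall i j, p i j * p j i = 1).

(* [lab] labels the blocks of [p] by 'I_r: two indices get the same label iff
   the corresponding rows of [p] are identical, and the block labelled [a]
   has exactly [sz a] elements.  (With all sz a > 0, this says the blocks of
   p are exactly B_1,...,B_r with |B_a| = sz a, B_a = lab^-1(a).) *)
Definition block_labeling (k : fieldType) (N r : nat) (p : 'M[k]_N)
    (lab : 'I_N -> 'I_r) (sz : 'I_r -> nat) : Prop :=
  (forall i j : 'I_N, lab i = lab j <-> row i p = row j p) /\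
  (forall a : 'I_r, #|[set i | lab i == a]| = sz a).

(* Stab(p), with block B_a identified with a via lab:
   sigma is in Stab(p) iff |B_(sigma a)| = |B_a| for all a, and
   p_{B C} = p_{sigma(B) sigma(C)} for all blocks B, C (entrywise: every entry
   of p in block B x C equals every entry in block sigma(B) x sigma(C)). *)
Definition in_stab (k : fieldType) (N r : nat) (p : 'M[k]_N)
    (lab : 'I_N -> 'I_r) (sigma : {perm 'I_r}) : Prop :=
  (forall a : 'I_r, #|[set i | lab i == sigma a]| = #|[set i | lab i == a]|) /\
  (forall i j i' j' : 'I_N,
      lab i' = sigma (lab i) -> lab j' = sigma (lab j) -> p i j = p i' j').

Definition realizable (k : fieldType) (N r : nat) (sz : 'I_r -> nat)
    (G : {set {perm 'I_r}}) : Prop :=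
  exists (p : 'M[k]_N) (lab : 'I_N -> 'I_r),
    qparam p /\ block_labeling p lab sz /\
    (forall sigma : {perm 'I_r}, in_stab p lab sigma <-> sigma \in G).

(** A quantum parameter matrix [p] satisfies [p i j = (p j i)^-1], so equal rows
    force equal columns and [p] is constant on every rectangle [B x C] of blocks:
    [p] is the inflation of an [r x r] quantum parameter matrix [Q] with pairwise
    distinct rows, and [Stab(p)] is the group of permutations preserving both [Q]
    and the block sizes.  Conversely every such [Q] inflates along any labelling
    with the prescribed fibre sizes.  Realizability thus only depends on which
    permutations preserve the sizes, and multiplying all sizes by [m > 0] does
    not change that. *)
From HB Require Import structures.
From mathcomp Require Import all_boot all_order all_algebra all_fingroup.
Set Implicit Arguments. Unset Strict Implicit. Unset Printing Implicit Defensive.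
Import GRing.Theory.
Local Open Scope ring_scope.

Lemma fibres_of_card r (sz : 'I_r -> nat) N :
  (\sum_(a < r) sz a)%N = N ->
  exists lab : 'I_N -> 'I_r, forall a, #|[set i | lab i == a]| = sz a.
Proof.
move=> sumN.
pose T := {a : 'I_r & 'I_(sz a)}.
have cardT : #|{: T}| = N.
  rewrite card_tagged -sumN sumnE big_map big_enum.
  by apply: eq_bigr => a _; rewrite card_ord.
pose f (x : T) : 'I_N := cast_ord cardT (enum_rank x).
pose g (i : 'I_N) : T := enum_val (cast_ord (esym cardT) i).
have fK : cancel f g by move=> x; rewrite /f /g cast_ordK enum_rankK.
have gK : cancel g f by move=> i; rewrite /f /g enum_valK cast_ordKV.
exists (fun i => tag (g i)) => a.
have -> : [set i | tag (g i) == a] = [set f (Tagged _ y) | y : 'I_(sz a)].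
  apply/setP => i; rewrite inE; apply/eqP/imsetP => [<-|[y _ ->]]; last by rewrite fK.
  by exists (tagged (g i)); rewrite // -{1}[i]gK; case: (g i).
rewrite card_imset ?card_ord //; apply: (inj_comp (can_inj fK)) => y1 y2 /eqP.
by rewrite -tag_eqE /tag_eq /= eqxx tagged_asE => /eqP.
Qed.

Lemma fibres_section (I J : finType) (f : I -> J) :
  (forall a, 0 < #|[set i | f i == a]|)%N -> exists g : J -> I, cancel g f.
Proof.
move=> fibre_gt0.
have preim a : exists i, f i = a.
  by have := fibre_gt0 a; rewrite card_gt0 => /set0Pn[i]; rewrite inE => /eqP <-; exists i.
by have [g gK] := fin_all_exists preim; exists g.
Qed.

Lemma qparam_block_const (k : fieldType) N (p : 'M[k]_N) i i' j j' :
  qparam p -> row i p = row i' p -> row j p = row j' p -> p i j = p i' j'.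
Proof.
move=> [_ p_inv] /rowP ri /rowP rj.
have := ri j; rewrite !mxE => ->.
rewrite -(mulr1_eq (p_inv j i')) -(mulr1_eq (p_inv j' i')).
by have := rj i'; rewrite !mxE => ->.
Qed.

Definition size_preserving r (sz : 'I_r -> nat) (s : {perm 'I_r}) : Prop :=
  forall a, sz (s a) = sz a.

Section Inflation.

Variables (k : fieldType) (N r : nat) (lab : 'I_N -> 'I_r).

Definition inflate (Q : 'M[k]_r) : 'M[k]_N := \matrix_(i, j) Q (lab i) (lab j).

Lemma inflate_qparam Q : qparam Q -> qparam (inflate Q).
Proof. by case=> Q1 Q_inv; split=> [i|i j]; rewrite !mxE. Qed.

Variable rep : 'I_r -> 'I_N.
Hypothesis labK : cancel rep lab.

Definition compress (p : 'M[k]_N) : 'M[k]_r := \matrix_(a, b) p (rep a) (rep b).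

Lemma compress_qparam p : qparam p -> qparam (compress p).
Proof. by case=> p1 p_inv; split=> [a|a b]; rewrite !mxE. Qed.

Lemma compressK p :
  qparam p -> (forall i j, lab i = lab j -> row i p = row j p) ->
  inflate (compress p) = p.
Proof.
move=> p_q rowE; apply/matrixP => i j; rewrite !mxE.
by apply: qparam_block_const => //; apply: rowE; rewrite labK.
Qed.

Lemma inflate_row_eq Q i j :
  row (lab i) Q = row (lab j) Q <-> row i (inflate Q) = row j (inflate Q).
Proof.
split=> /rowP rowE; apply/rowP => c.
  by have := rowE (lab c); rewrite !mxE.
by have := rowE (rep c); rewrite !mxE labK.
Qed.

Lemma in_stab_inflate (sz : 'I_r -> nat) Q s :
  (forall a, #|[set i | lab i == a]| = sz a) ->
  in_stab (inflate Q) lab s <->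
  size_preserving sz s /\ (forall a b, Q (s a) (s b) = Q a b).
Proof.
move=> cardE; split=> -[s_sz s_Q]; split.
- by move=> a; rewrite -!cardE.
- move=> a b; have := s_Q (rep a) (rep b) (rep (s a)) (rep (s b)).
  by rewrite !mxE !labK => ->.
- by move=> a; rewrite !cardE.
- by move=> i j i' j' ei ej; rewrite !mxE ei ej s_Q.
Qed.

End Inflation.

Definition block_realizable (k : fieldType) r (sz : 'I_r -> nat)
    (G : {set {perm 'I_r}}) : Prop :=
  exists Q : 'M[k]_r,
    [/\ qparam Q, injective (fun a => row a Q) &
        forall s, size_preserving sz s /\ (forall a b, Q (s a) (s b) = Q a b) <-> s \in G].

Lemma realizable_blockP (k : fieldType) N r (sz : 'I_r -> nat) G :
  (forall a, 0 < sz a)%N -> (\sum_(a < r) sz a)%N = N ->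
  realizable k N sz G <-> block_realizable k sz G.
Proof.
move=> sz_gt0 sumN.
have has_section lab : (forall a, #|[set i : 'I_N | lab i == a]| = sz a) ->
    exists rep, cancel rep lab.
  by move=> cardE; apply: fibres_section => a; rewrite cardE.
split.
- move=> [p [lab [p_q [[rowE cardE] stabE]]]].
  have [rep labK] := has_section lab cardE.
  have pE := compressK labK p_q (fun i j => proj1 (rowE i j)).
  exists (compress rep p); split.
  + exact: compress_qparam.
  + move=> a b Qab; rewrite -[a]labK -[b]labK; apply/rowE; rewrite -pE.
    by apply/(inflate_row_eq labK); rewrite !labK.
  + move=> s; apply: iff_trans _ (stabE s); apply: iff_sym.
    by have := in_stab_inflate labK (compress rep p) s cardE; rewrite pE.
- move=> [Q [Q_q Q_inj stabE]].
  have [lab cardE] := fibres_of_card sumN.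
  have [rep labK] := has_section lab cardE.
  exists (inflate lab Q), lab; split; [exact: inflate_qparam | split; [split|]] => //.
  + move=> i j; split=> [lab_ij | /(inflate_row_eq labK)/Q_inj //].
    by apply/(inflate_row_eq labK); rewrite lab_ij.
  + by move=> s; apply: iff_trans (in_stab_inflate labK Q s cardE) (stabE s).
Qed.

Lemma eq_block_realizable (k : fieldType) r (sz sz' : 'I_r -> nat) G :
  (forall s, size_preserving sz s <-> size_preserving sz' s) ->
  block_realizable k sz G <-> block_realizable k sz' G.
Proof.
move=> szE; split=> -[Q [Q_q Q_inj stabE]]; exists Q; split=> // s;
  apply: iff_trans _ (stabE s); split=> -[s_sz s_Q]; split=> //; exact/szE.
Qed.

Lemma size_preserving_scale r m (sz : 'I_r -> nat) s :
  (0 < m)%N -> size_preserving (fun a => m * sz a)%N s <-> size_preserving sz s.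
Proof.
move=> m_gt0; split=> sz_s a; last by rewrite /= sz_s.
by apply/eqP; rewrite -(eqn_pmul2l m_gt0) sz_s.
Qed.

Unset Implicit Arguments.
Local Close Scope ring_scope.

Theorem corollary5p5 (k : fieldType) (n m r : nat) (ns : 'I_r -> nat)
    (G : {group {perm 'I_r}}) :
  (0 < n)%N -> (0 < m)%N -> (0 < r)%N -> (forall a, 0 < ns a)%N ->
  (\sum_(a < r) ns a)%N = n ->
  realizable k n ns G <-> realizable k (m * n) (fun a => m * ns a)%N G.
Proof.
move=> _ m_gt0 _ ns_gt0 sumN.
have mns_gt0 a : 0 < m * ns a by rewrite muln_gt0 m_gt0 ns_gt0.
have sum_mN : \sum_(a < r) m * ns a = m * n by rewrite -big_distrr sumN.
apply: iff_trans (realizable_blockP _ _ ns_gt0 sumN) _.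
apply: iff_trans _ (iff_sym (realizable_blockP _ _ mns_gt0 sum_mN)).
by apply: eq_block_realizable => s; apply: iff_sym; exact: size_preserving_scale.
Qed.
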